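(* Let $q\in(0,1)$ and let $\alpha,p\ge0$ be integers. For every integer $t$ with $0\le t\le p$, $$\sum_{M\in M^{(\alpha)}_{p,0}(t)}q^{\mathrm{cr}(M)}=\begin{bmatrix} p+\alpha\\ t\end{bmatrix}_q\begin{bmatrix} p\\ t\end{bmatrix}_q[t]_q!.$$
   Context: $[n]_q=\frac{1-q^n}{1-q}$, $[n]_q!=\prod_{m=1}^n[m]_q$, $\begin{bmatrix} n\\ m\end{bmatrix}_q=\frac{[n]_q!}{[m]_q![n-m]_q!}$ ($=0$ if $m>n$). Bipartite matchings: for integers $n,j,\alpha\ge0$, let $T_-=\{-\alpha-j,\dots,-1\}$, $T_+=\{1,\dots,n\}$ (top row), $B_-=\{-\tilde j,\dots,-\tilde 1\}$, $B_+=\{\tilde1,\dots,\tilde n\}$ (bottom row; $\tilde m$ is a formal copy of the integer $m$, bottom vertices compared via these integers). A bipartite matching is a set partition of $T_-\cup T_+\cup B_-\cup B_+$ into singletons (isolated vertices) and blocks $\{a,\tilde b\}$ with $a$ top, $\tilde b$ bottom (edges, written $(a,\tilde b)$). $M^{(\alpha)}_{n,j}$ is the set of such matchings with no edge between $T_-$ and $B_-$; $M^{(\alpha)}_{n,j}(l)$ its subset with exactly $l$ edges. The crossing number $\mathrm{cr}(M)$ is the total number of: (C1) unordered pairs of edges $(a,\tilde b),(c,\tilde d)$ with $a<c$ and $d<b$; (C2) pairs of an edge $(a,\tilde b)$ and an isolated top vertex $c$ with $c<a$; (C3) pairs of an edge $(a,\tilde b)$ and an isolated bottom vertex $\tilde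 d$ with $d<b$. *)

From HB Require Import structures.
From mathcomp Require Import all_boot all_order all_algebra.
Set Implicit Arguments. Unset Strict Implicit. Unset Printing Implicit Defensive.
Import Order.TTheory GRing.Theory Num.Theory.
Local Open Scope ring_scope.

Definition qint {R : fieldType} (q : R) (n : nat) : R := (1 - q ^+ n) / (1 - q).
Definition qfact {R : fieldType} (q : R) (n : nat) : R :=
  \prod_(1 <= m < n.+1) qint q m.
Definition qbinom {R : fieldType} (q : R) (n m : nat) : R :=
  if (m <= n)%N then qfact q n / (qfact q m * qfact q (n - m)) else 0.

(* Top row T_- ∪ T_+ = {-alpha-j,...,-1} ∪ {1,...,n} is encoded, in increasing
   order, by 'I_(alpha + j + n): index i encodes -alpha-j+i if i < alpha+j,
   and i - (alpha+j) + 1 otherwise.  So T_- = indices < alpha + j.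
   Bottom row B_- ∪ B_+ = {-~j,...,-~1} ∪ {~1,...,~n} is encoded, in
   increasing order, by 'I_(j + n); B_- = indices < j.
   A bipartite matching is encoded by the function sending each bottom
   vertex to its top partner (Some a) or to None if it is isolated; it must be
   injective on matched vertices.  A top vertex is isolated iff it is not in
   the image. *)
Definition matching (alpha n j : nat) :=
  {ffun 'I_(j + n) -> option 'I_(alpha + j + n)}.

Definition is_bip_matching (alpha n j : nat) (f : matching alpha n j) : bool :=
  [forall b1, forall b2, (f b1 != None) ==> (f b1 == f b2) ==> (b1 == b2)].

Definition no_neg_edge (alpha n j : nat) (f : matching alpha n j) : bool :=
  [forall b, forall a, (f b == Some a) ==> ~~ ((b < j)%N && (a < alpha + j)%N)].

Definition in_M (alpha n j : nat) (f : matching alpha n j) : bool :=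
  is_bip_matching f && no_neg_edge f.

Definition nedges (alpha n j : nat) (f : matching alpha n j) : nat :=
  #|[set b | f b != None]|.

Definition top_isolated (alpha n j : nat) (f : matching alpha n j)
  (c : 'I_(alpha + j + n)) : bool := [forall b, f b != Some c].

Definition cr (alpha n j : nat) (f : matching alpha n j) : nat :=
  (* (C1): pairs of edges (a,~b), (c,~d) with a < c and d < b;
     each unordered pair is counted once since a < c fixes the order *)
  #|[set bd : 'I_(j + n) * 'I_(j + n) |
      [exists a, exists c, [&& f bd.1 == Some a, f bd.2 == Some c,
                              (a < c)%N & (bd.2 < bd.1)%N]]]|
  + #|[set bc : 'I_(j + n) * 'I_(alpha + j + n) |
      [exists a, [&& f bc.1 == Some a, top_isolated f bc.2 & (bc.2 < a)%N]]]|
  + #|[set bd : 'I_(j + n) * 'I_(j + n) |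
      [&& f bd.1 != None, f bd.2 == None & (bd.2 < bd.1)%N]]|.

From HB Require Import structures.
From mathcomp Require Import all_boot all_order all_algebra ring zify.
Set Implicit Arguments. Unset Strict Implicit. Unset Printing Implicit Defensive.
Import Order.TTheory GRing.Theory Num.Theory.
Local Open Scope ring_scope.

(* Count, more generally, matchings of a set B of bottom vertices into a set
   A of top vertices, and remove the leftmost bottom vertex b0.  If b0 is
   isolated it crosses (C3) each of the t edges, all of which end right of it.
   If b0 is matched to a, its edge crosses each top vertex c < a of A exactly
   once: through (C1) if c is matched, since that edge ends right of b0, and
   through (C2) if c is isolated; no other crossing changes.  Hence
     M(A, B, t) = q^t M(A, B - b0, t)
                  + sum_(a in A) q^#{c in A | c < a} M(A - a, B - b0, t - 1),
   and as a ranges over A the exponent ranges over 0, ..., #A - 1.  The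
   q-Pascal rule and absorption show that
   [#A choose t]_q [#B choose t]_q [t]_q! satisfies the same recursion. *)

Section QCalculus.
Variables (F : fieldType) (q : F).
Hypothesis q_nonroot : forall m, (0 < m)%N -> q ^+ m != 1.

Lemma subq_neq0 : 1 - q != 0.
Proof. by rewrite subr_eq0 eq_sym -[q]expr1 q_nonroot. Qed.

Lemma qint_neq0 m : (0 < m)%N -> qint q m != 0.
Proof.
by move=> m_gt0; rewrite mulf_neq0 ?invr_eq0 ?subq_neq0 // subr_eq0 eq_sym q_nonroot.
Qed.

Lemma qint_geom n : \sum_(i < n) q ^+ i = qint q n.
Proof.
have q1_neq0 : q - 1 != 0 by rewrite -opprB oppr_eq0 subq_neq0.
by apply: (mulfI q1_neq0); rewrite -subrX1 /qint; field; exact: subq_neq0.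
Qed.

Lemma qintD m n : qint q (m + n) = qint q m + q ^+ m * qint q n.
Proof. by rewrite /qint exprD; field; exact: subq_neq0. Qed.

Lemma qfact0 : qfact q 0 = 1.
Proof. by rewrite /qfact big_geq. Qed.

Lemma qfactS n : qfact q n.+1 = qfact q n * qint q n.+1.
Proof. by rewrite /qfact big_nat_recr. Qed.

Lemma qfact_neq0 n : qfact q n != 0.
Proof.
by elim: n => [|n IHn]; rewrite ?qfact0 ?oner_eq0 // qfactS mulf_neq0 ?qint_neq0.
Qed.

Lemma qbinomn0 n : qbinom q n 0 = 1.
Proof. by rewrite /qbinom subn0 qfact0 mul1r divff ?qfact_neq0. Qed.

Lemma qbinomS n t :
  qbinom q n.+1 t.+1 = qbinom q n t + q ^+ t.+1 * qbinom q n t.+1.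
Proof.
rewrite /qbinom ltnS; case: (ltngtP t n) => [lt_tn|lt_nt|->]; last first.
- by rewrite !subnn qfact0 mulr0 addr0 !mulr1 !divff ?qfact_neq0.
- by rewrite mulr0 addr0.
have def_nt : (n - t = (n - t.+1).+1)%N by rewrite subnSK.
have qint_nt : qint q (n - t.+1).+1 != 0 by rewrite qint_neq0.
have qintS_split : qint q n.+1 = qint q t.+1 + q ^+ t.+1 * qint q (n - t.+1).+1.
  by rewrite -def_nt -qintD addSn subnKC // ltnW.
rewrite subSS def_nt !qfactS qintS_split.
field; rewrite qint_nt !qfact_neq0 qint_neq0 //.
Qed.

Lemma qbinom_absorb k t :
  qint q k.+1 * qbinom q k t = qint q t.+1 * qbinom q k.+1 t.+1.
Proof.
rewrite /qbinom ltnS subSS; case: leqP => // le_tk; last by rewrite !mulr0.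
by rewrite !qfactS; field; rewrite !qfact_neq0 qint_neq0.
Qed.

Definition qmatchings k n t := qbinom q k t * qbinom q n t * qfact q t.

Lemma qmatchings0 k t : qmatchings k 0 t = (t == 0)%:R.
Proof.
by rewrite /qmatchings; case: t => [|t] /=; rewrite ?qbinomn0 ?qfact0 ?mulr1 // mulr0 mul0r.
Qed.

Lemma qmatchingsS k n t :
  qmatchings k n.+1 t = q ^+ t * qmatchings k n t +
    (if t is t'.+1 then qint q k * qmatchings k.-1 n t' else 0).
Proof.
rewrite /qmatchings; case: t => [|t]; first by rewrite !qbinomn0 qfact0 !mul1r addr0.
case: k => [|k]; first by rewrite /qint expr0 subrr !mul0r mulr0 addr0.
rewrite /= qfactS (qbinomS n t) !(mulrA (qint q k.+1)) qbinom_absorb; ring.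
Qed.

End QCalculus.

Lemma card_set_sum (I : finType) (P : pred I) : #|[set x | P x]| = (\sum_x P x)%N.
Proof. by rewrite -sum1dep_card big_mkcond; apply: eq_bigr => x _; case: (P x). Qed.

Lemma card_set_sum2 (I J : finType) (P : pred (I * J)) :
  #|[set x | P x]| = (\sum_i \sum_j P (i, j))%N.
Proof.
by rewrite card_set_sum (pair_bigA _ (fun i j => (P (i, j) : nat))); apply: eq_bigr => -[].
Qed.

Section MatchingsBetween.
Variables (N P : nat).
Local Notation matching := {ffun 'I_P -> option 'I_N}.
Implicit Types (A : {set 'I_N}) (B : {set 'I_P}) (f g : matching).

Definition matching_on A B f :=
  [&& [forall b, (b \notin B) ==> (f b == None)],
      [forall b, forall a, (f b == Some a) ==> (a \in A)] &
      [forall b1, forall b2, (f b1 != None) ==> (f b1 == f b2) ==> (b1 == b2)]].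

Definition nmatched f := (\sum_b (f b != None))%N.

Definition edge_cross f b1 b2 : bool :=
  if (f b1, f b2) is (Some a, Some c) then (a < c)%N && (b2 < b1)%N else false.

Definition top_free A f c := (c \in A) && [forall b, f b != Some c].

Definition edge_cross_top A f b c : bool :=
  if f b is Some a then top_free A f c && (c < a)%N else false.

Definition edge_cross_bottom B f b d :=
  [&& f b != None, d \in B, f d == None & (d < b)%N].

Definition crossings A B f :=
  (\sum_b1 \sum_b2 edge_cross f b1 b2 + \sum_b \sum_c edge_cross_top A f b c
   + \sum_b \sum_d edge_cross_bottom B f b d)%N.

Definition set_at f b0 x : matching := [ffun b => if b == b0 then x else f b].

Definition nbelow A a := (\sum_c ((c \in A) && (c < a)%N))%N.

Lemma matching_onP A B f : reflect
  [/\ forall b, b \notin B -> f b = None,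
      forall b a, f b = Some a -> a \in A &
      forall b1 b2, f b1 != None -> f b1 = f b2 -> b1 = b2]
  (matching_on A B f).
Proof.
apply: (iffP and3P) => [[/forallP f_supp /forallP f_ran /forallP f_inj]|].
  split=> [b /(implyP (f_supp b)) /eqP //|b a fb|b1 b2 fb1 fb12].
    by apply: (implyP (forallP (f_ran b) a)); rewrite fb.
  by apply/eqP; apply: (implyP (implyP (forallP (f_inj b1) b2) fb1)); rewrite fb12.
case=> f_supp f_ran f_inj; split; apply/forallP => b; first by apply/implyP => /f_supp ->.
  by apply/forallP => a; apply/implyP => /eqP /f_ran.
apply/forallP => b2; apply/implyP => fb; apply/implyP => /eqP fb12.
by rewrite (f_inj _ _ fb fb12).
Qed.

Lemma set_atE f b0 x b : set_at f b0 x b = if b == b0 then x else f b.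
Proof. by rewrite ffunE. Qed.

Lemma sum_eq_and (I : finType) (y : I) (F : I -> bool) :
  (\sum_x ((x == y) && F x) = F y)%N.
Proof. by rewrite (bigD1 y) //= eqxx big1 ?addn0 // => x /negbTE ->. Qed.

Lemma sum_matched_tops A B g (p : pred 'I_N) : matching_on A B g ->
  (\sum_b oapp p false (g b)
   = \sum_c ([exists b, g b == Some c] && p c))%N.
Proof.
case/matching_onP=> _ _ g_inj.
transitivity (\sum_b \sum_c ((g b == Some c) && p c))%N.
  apply: eq_bigr => b _; case: (g b) => [c0|]; last by rewrite big1.
  by rewrite -(sum_eq_and c0 p); apply: eq_bigr => c _; rewrite eq_sym.
rewrite exchange_big; apply: eq_bigr => c _.
case: existsP => [[b1 /eqP gb1]|nog]; last first.
  by rewrite big1 // => b _; case: eqP => // gb; case: nog; exists b; rewrite gb.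
rewrite (bigD1 b1) //= gb1 eqxx big1 ?addn0 // => b nb.
by case: eqP => // gb; case/eqP: nb; apply: g_inj; rewrite gb ?gb1.
Qed.

Variables (R : comPzRingType) (q : R).

Definition crossing_sum A B t :=
  \sum_(f | matching_on A B f && (nmatched f == t)) q ^+ crossings A B f.

Section RemoveMin.
Variables (B : {set 'I_P}) (b0 : 'I_P).
Hypotheses (b0B : b0 \in B) (b0_min : forall b, b \in B -> (b0 <= b)%N).

Lemma matching_on_min_gt A f b :
  matching_on A (B :\ b0) f -> f b != None -> (b0 < b)%N.
Proof.
case/matching_onP=> f_supp _ _ fb; have : b \in B :\ b0.
  by apply: contraR fb => /f_supp ->.
by rewrite !inE ltn_neqAle => /andP[/negbTE nb0 /b0_min ->]; rewrite val_eqE eq_sym nb0.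
Qed.

Lemma matching_on_isolate A f :
  (matching_on A B f && (f b0 == None)) = matching_on A (B :\ b0) f.
Proof.
apply/andP/matching_onP => [[/matching_onP[f_supp f_ran f_inj] /eqP fb0]|].
  by split=> // b; rewrite !inE negb_and negbK => /orP[/eqP ->|/f_supp].
case=> f_supp f_ran f_inj; split; last by rewrite f_supp // !inE eqxx.
by apply/matching_onP; split=> // b bNB; rewrite f_supp // !inE (negbTE bNB) andbF.
Qed.

Lemma crossings_isolate A f : matching_on A (B :\ b0) f ->
  crossings A B f = (crossings A (B :\ b0) f + nmatched f)%N.
Proof.
move=> f_on; have fb0 : f b0 = None by case/matching_onP: f_on => -> //; rewrite !inE eqxx.
rewrite /crossings -[in RHS]addnA; congr (_ + _)%N.
rewrite /nmatched -big_split; apply: eq_bigr => b _ /=.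
rewrite (bigD1 b0) // [in RHS](bigD1 b0) //= addnAC; congr (_ + _)%N.
  rewrite /edge_cross_bottom !inE eqxx b0B fb0 /= andbF add0n.
  by case: (boolP (f b != None)) => //= /(matching_on_min_gt f_on) ->.
by apply: eq_bigr => d nd; rewrite /edge_cross_bottom !inE nd.
Qed.

Lemma set_atK f x : (set_at (set_at f b0 x) b0 None == f) = (f b0 == None).
Proof.
apply/eqP/eqP => [<-|fb0]; first by rewrite ffunE eqxx.
by apply/ffunP => b; rewrite !ffunE; case: eqP => [->|].
Qed.

Lemma nmatched_set_at f a :
  f b0 = None -> nmatched (set_at f b0 (Some a)) = (nmatched f).+1.
Proof.
move=> fb0; rewrite /nmatched (bigD1 b0) // [in RHS](bigD1 b0) //= !ffunE eqxx fb0.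
by congr (_ + _)%N; apply: eq_bigr => b /negbTE nb; rewrite ffunE nb.
Qed.

Lemma matching_on_match A g a : a \in A ->
  (matching_on A B (set_at g b0 (Some a)) && (g b0 == None))
  = matching_on (A :\ a) (B :\ b0) g.
Proof.
move=> aA; have fE := set_atE g b0 (Some a).
apply/andP/matching_onP => [[/matching_onP[f_supp f_ran f_inj] /eqP gb0]|].
  have neq_b0 b : g b != None -> b != b0 by apply: contra_neq => ->; rewrite gb0.
  have gf b : g b != None -> set_at g b0 (Some a) b = g b.
    by move=> gb; rewrite fE (negbTE (neq_b0 _ gb)).
  split=> [b|b c gbc|b1 b2 gb1 gb12].
  - rewrite !inE negb_and negbK => /orP[/eqP -> //|bNB].
    by have := f_supp b bNB; rewrite fE; case: eqP => [->|]; rewrite ?b0B.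
  - have gb : g b != None by rewrite gbc.
    rewrite !inE (f_ran b c) ?gf // andbT; apply: contra_neq (neq_b0 _ gb) => ca.
    by apply: f_inj; rewrite gf // gbc ca fE eqxx.
  - by apply: f_inj; rewrite !gf -?gb12.
case=> g_supp g_ran g_inj; have gb0 : g b0 = None by rewrite g_supp // !inE eqxx.
split; last exact/eqP; apply/matching_onP; split=> [b bNB|b c|b1 b2].
- rewrite fE (negbTE (contraNneq _ bNB)) => [|->] //.
  by rewrite g_supp // !inE (negbTE bNB) andbF.
- by rewrite fE; case: eqP => _ => [[<-] //|/g_ran/setD1P[]].
- rewrite !fE; case: (eqVneq b1 b0) => [->|n1]; case: (eqVneq b2 b0) => [->|n2] //.
  + by move=> _ /esym/g_ran; rewrite !inE eqxx.
  + by move=> _ /g_ran; rewrite !inE eqxx.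
  + exact: g_inj.
Qed.

Section AddEdge.
Variables (A : {set 'I_N}) (g : matching) (a : 'I_N).
Hypothesis g_on : matching_on (A :\ a) (B :\ b0) g.
Local Notation f := (set_at g b0 (Some a)).

Let gb0 : g b0 = None.
Proof. by case/matching_onP: g_on => -> //; rewrite !inE eqxx. Qed.

Let g_ran b c : g b = Some c -> c \in A :\ a.
Proof. by case/matching_onP: g_on => _ g_ran _; apply: g_ran. Qed.

Lemma top_free_set_at c : top_free A f c = top_free (A :\ a) g c.
Proof.
rewrite /top_free !inE.
apply/andP/andP => [[cA /forallP f_free]|[/andP[ca cA] /forallP g_free]].
  split; first by rewrite cA andbT; apply/eqP => ca; move: (f_free b0); rewrite set_atE ca !eqxx.
  apply/forallP => b; have := f_free b; rewrite set_atE.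
  by case: (eqVneq b b0) => [->|_ //]; rewrite gb0.
split=> //; apply/forallP => b; rewrite set_atE; case: (eqVneq b b0) => _; last exact: g_free.
by apply: contra_neq ca => -[].
Qed.

Lemma edge_cross_set_at :
  (\sum_b1 \sum_b2 edge_cross f b1 b2 = \sum_b1 \sum_b2 edge_cross g b1 b2
   + \sum_b oapp (fun c : 'I_N => c < a)%N false (g b))%N.
Proof.
rewrite -big_split; apply: eq_bigr => b1 _ /=.
have [->|nb1] := eqVneq b1 b0.
  rewrite gb0 addn0 [RHS]big1 => [|b2 _]; last by rewrite /edge_cross gb0.
  apply: big1 => b2 _; have [->|nb2] := eqVneq b2 b0.
    by rewrite /edge_cross set_atE eqxx ltnn.
  rewrite /edge_cross !set_atE eqxx (negbTE nb2); case gb2: (g b2) => [c|] //=.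
  have lt_b0b2 : (b0 < b2)%N by rewrite (matching_on_min_gt g_on) ?gb2.
  by rewrite [(b2 < b0)%N]ltnNge (ltnW lt_b0b2) andbF.
set x := oapp (fun c : 'I_N => c < a)%N false (g b1).
transitivity (\sum_b2 (edge_cross g b1 b2 + ((b2 == b0) && x)))%N.
  apply: eq_bigr => b2 _; rewrite /edge_cross !set_atE (negbTE nb1).
  have [->|nb2] := eqVneq b2 b0; last by rewrite addn0.
  rewrite gb0 /x; case gb1: (g b1) => [c|] //=.
  by rewrite (matching_on_min_gt g_on) ?andbT ?gb1.
by rewrite big_split /= sum_eq_and.
Qed.

Lemma edge_cross_top_set_at :
  (\sum_b \sum_c edge_cross_top A f b c = \sum_b \sum_c edge_cross_top (A :\ a) g b c
   + \sum_c (top_free (A :\ a) g c && (c < a)%N))%N.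
Proof.
rewrite (bigD1 b0) // [in RHS](bigD1 b0) //= [X in (X + _ + _)%N]big1 => [|c _]; last first.
  by rewrite /edge_cross_top gb0.
rewrite add0n addnC; congr (_ + _)%N.
  apply: eq_bigr => b nb; apply: eq_bigr => c _.
  by rewrite /edge_cross_top set_atE (negbTE nb) top_free_set_at.
by apply: eq_bigr => c _; rewrite /edge_cross_top set_atE eqxx top_free_set_at.
Qed.

Lemma edge_cross_bottom_set_at :
  (\sum_b \sum_d edge_cross_bottom B f b d
   = \sum_b \sum_d edge_cross_bottom (B :\ b0) g b d)%N.
Proof.
apply: eq_bigr => b _; apply: eq_bigr => d _; rewrite /edge_cross_bottom !set_atE !inE.
have [->|nb] := eqVneq b b0.
  rewrite gb0 /=; case dB: (d \in B) => //=.
  by rewrite ltnNge b0_min ?andbF.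
by have [->|nd] := eqVneq d b0; rewrite /= ?andbF.
Qed.

Lemma nbelow_split :
  nbelow A a = (\sum_c ([exists b, g b == Some c] && (c < a)%N)
                + \sum_c (top_free (A :\ a) g c && (c < a)%N))%N.
Proof.
rewrite /nbelow -big_split; apply: eq_bigr => c _; rewrite /top_free.
case: existsP => [[b /eqP gb]|nog] /=.
  have /setD1P[_ cA] := g_ran gb.
  have -> : [forall b1, g b1 != Some c] = false.
    by apply/negbTE/forallPn; exists b; rewrite gb eqxx.
  by rewrite cA andbF /= addn0.
have -> : [forall b, g b != Some c].
  by apply/forallP => b; apply/eqP => gb; case: nog; exists b; rewrite gb.
rewrite !inE andbT add0n; case: ltnP => [ca|]; rewrite ?andbF ?andbT //.
by rewrite (_ : c != a) // neq_ltn ca.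
Qed.

Lemma crossings_match :
  crossings A B f = (crossings (A :\ a) (B :\ b0) g + nbelow A a)%N.
Proof.
rewrite /crossings edge_cross_set_at edge_cross_top_set_at edge_cross_bottom_set_at.
rewrite (sum_matched_tops (fun c => (c < a)%N) g_on) nbelow_split; lia.
Qed.

End AddEdge.

Lemma crossing_sum_isolated A t :
  \sum_(f | matching_on A B f && (nmatched f == t) && (f b0 == None)) q ^+ crossings A B f
  = q ^+ t * crossing_sum A (B :\ b0) t.
Proof.
rewrite big_distrr; apply: eq_big => [f|f].
  by rewrite -andbA (andbC (nmatched f == t)) andbA matching_on_isolate.
case/andP=> /andP[f_on /eqP <-] fb0.
have {}f_on : matching_on A (B :\ b0) f by rewrite -matching_on_isolate f_on.
by rewrite crossings_isolate // exprD mulrC.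
Qed.

Lemma crossing_sum_matched A a t : a \in A ->
  \sum_(f | matching_on A B f && (nmatched f == t) && (f b0 == Some a)) q ^+ crossings A B f
  = q ^+ nbelow A a * (if t is t'.+1 then crossing_sum (A :\ a) (B :\ b0) t' else 0).
Proof.
move=> aA.
rewrite (reindex_onto (fun g => set_at g b0 (Some a)) (fun f => set_at f b0 None)); last first.
  by move=> f /andP[_ /eqP fb0]; apply/ffunP => b; rewrite !set_atE; case: eqP => [->|].
have fb0 g : set_at g b0 (Some a) b0 = Some a by rewrite set_atE eqxx.
case: t => [|t].
  rewrite mulr0; apply: big_pred0 => g; apply/negbTE/negP.
  case/andP=> /andP[/andP[_ /eqP ng] _]; rewrite set_atK => /eqP gb0.
  by rewrite nmatched_set_at in ng.
rewrite big_distrr; apply: eq_big => [g|g].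
  rewrite fb0 eqxx andbT set_atK; case: (boolP (g b0 == None)) => [gb0|ngb0]; last first.
    rewrite andbF; apply/esym/negbTE/negP => /andP[/matching_onP[g_supp _ _] _].
    by move: ngb0; rewrite g_supp // !inE eqxx.
  rewrite nmatched_set_at ?(eqP gb0) // eqSS andbT -(matching_on_match _ aA) gb0 andbT.
  by rewrite andbC.
case/andP=> /andP[/andP[f_on _] _]; rewrite set_atK => gb0.
have g_on : matching_on (A :\ a) (B :\ b0) g by rewrite -(matching_on_match _ aA) f_on gb0.
by rewrite crossings_match // exprD mulrC.
Qed.

Lemma crossing_sum_split A t : crossing_sum A B t = q ^+ t * crossing_sum A (B :\ b0) t +
  \sum_(a in A) q ^+ nbelow A a * (if t is t'.+1 then crossing_sum (A :\ a) (B :\ b0) t' else 0).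
Proof.
rewrite {1}/crossing_sum (partition_big (fun f => f b0) predT) // (bigD1 None) //=.
rewrite crossing_sum_isolated; congr (_ + _).
rewrite (reindex_omap Some id) => [|[] //]; rewrite [RHS]big_mkcond.
apply: eq_big => [a|a _]; first by rewrite /= eqxx.
case: ifP => aA; first by rewrite -crossing_sum_matched.
apply: big_pred0 => f; apply/negbTE/negP => /andP[/andP[/matching_onP[_ f_ran _] _] /eqP fb0].
by rewrite (f_ran _ _ fb0) in aA.
Qed.

End RemoveMin.

End MatchingsBetween.

Lemma sum_nbelow (R : pzSemiRingType) N (A : {set 'I_N}) (F : nat -> R) :
  \sum_(a in A) F (nbelow A a) = \sum_(i < #|A|) F i.
Proof.
move cardA: #|A| => n; elim: n A cardA => [|n IHn] A cardA.
  by rewrite big_ord0; move/cards0_eq: cardA => ->; rewrite big_set0.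
have /card_gt0P[a0 a0A] : (0 < #|A|)%N by rewrite cardA.
have [m mA m_max] := arg_maxnP (@nat_of_ord N) a0A.
have {}mA : m \in A := mA; have {}m_max c : c \in A -> (c <= m)%N := m_max c.
have cardAm : #|A :\ m| = n by move: cardA; rewrite (cardsD1 m) mA => -[].
have nbelowE c : c \in A -> (c < m)%N = (c != m).
  by move=> cA; rewrite ltn_neqAle m_max // andbT val_eqE.
rewrite (big_setD1 m mA) big_ord_recr /= addrC; congr (_ + F _).
  rewrite -(IHn (A :\ m) cardAm); apply: eq_bigr => a /setD1P[am aA]; congr F.
  apply: eq_bigr => c _; rewrite !inE; case: (eqVneq c m) => [->|] //=.
  by rewrite mA ltnNge m_max.
rewrite -cardAm /nbelow card_set_sum; apply: eq_bigr => c _; rewrite !inE andbC.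
by case: (boolP (c \in A)) => [/nbelowE ->|]; rewrite ?andbF.
Qed.

Lemma crossing_sum_set0 (R : comPzRingType) (q : R) N P (A : {set 'I_N}) t :
  crossing_sum q A (set0 : {set 'I_P}) t = (t == 0)%:R.
Proof.
pose f0 : {ffun 'I_P -> option 'I_N} := [ffun=> None].
have on_set0 f : matching_on A set0 f = (f == f0).
  apply/matching_onP/eqP => [[f_supp _ _]|->].
    by apply/ffunP => b; rewrite ffunE f_supp ?inE.
  by split=> [b _|b c|b1 b2]; rewrite ffunE ?eqxx.
have nmatched_f0 : nmatched f0 = 0%N by rewrite /nmatched big1 // => b _; rewrite ffunE.
rewrite /crossing_sum (eq_bigl (fun f => (f == f0) && (t == 0)%N)) => [|f]; last first.
  by rewrite on_set0; case: eqP => // ->; rewrite nmatched_f0 eq_sym.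
case: (eqVneq t 0%N) => _; last by rewrite big_pred0 // => f; rewrite andbF.
rewrite (big_pred1 f0) => [|f]; last by rewrite andbT.
rewrite /crossings !big1 // => b _; apply: big1 => c _.
all: by rewrite /edge_cross /edge_cross_top /edge_cross_bottom ffunE.
Qed.

Lemma crossing_sum_closed (F : fieldType) (q : F) N P
    (A : {set 'I_N}) (B : {set 'I_P}) t :
  (forall m, (0 < m)%N -> q ^+ m != 1) ->
  crossing_sum q A B t = qmatchings q #|A| #|B| t.
Proof.
move=> q_nonroot; move cardB: #|B| => n; elim: n A B t cardB => [|n IHn] A B t cardB.
  by move/cards0_eq: cardB => ->; rewrite crossing_sum_set0 qmatchings0.
have /card_gt0P[b1 b1B] : (0 < #|B|)%N by rewrite cardB.
have [b0 b0B b0_min] := arg_minnP (@nat_of_ord P) b1B.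
have {}b0B : b0 \in B := b0B; have {}b0_min b : b \in B -> (b0 <= b)%N := b0_min b.
have cardBb0 : #|B :\ b0| = n by move: cardB; rewrite (cardsD1 b0) b0B => -[].
rewrite (crossing_sum_split _ b0B b0_min) IHn // qmatchingsS //; congr (_ + _).
case: t => [|t]; first by rewrite big1 // => a _; rewrite mulr0.
rewrite -qint_geom // -(sum_nbelow _ (fun i => q ^+ i)) big_distrl.
by apply: eq_bigr => a aA; rewrite IHn // (cardsD1 a A) aA.
Qed.

Lemma nedges_nmatched alpha n j (f : matching alpha n j) : nedges f = nmatched f.
Proof. exact: card_set_sum. Qed.

Lemma in_M0 alpha n (f : matching alpha n 0) : in_M f = matching_on setT setT f.
Proof.
have no_neg : no_neg_edge f by apply/'forall_forallP => b a; apply/implyP.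
rewrite /in_M no_neg andbT; apply/idP/and3P => [f_inj|[_ _ //]].
by split=> //; apply/forallP => b; rewrite ?inE //; apply/forallP => a; rewrite inE implybT.
Qed.

Lemma cr_crossings alpha n j (f : matching alpha n j) : cr f = crossings setT setT f.
Proof.
rewrite /cr /crossings !card_set_sum2; congr (_ + _ + _)%N.
- apply: eq_bigr => b1 _; apply: eq_bigr => b2 _; congr nat_of_bool; rewrite /edge_cross /=.
  case: (f b1) => [a|]; case: (f b2) => [c|];
    try by apply/existsP => -[a' /existsP[c' /and4P[]]].
  apply/existsP/idP => [[a' /existsP[c' /and4P[/eqP[<-] /eqP[<-] -> ->]]] //|/andP[ac b21]].
  by exists a; apply/existsP; exists c; rewrite !eqxx ac b21.
- apply: eq_bigr => b _; apply: eq_bigr => c _; congr nat_of_bool.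
  rewrite /edge_cross_top /top_free /top_isolated inE /=; case: (f b) => [a|]; last first.
    by apply/existsP => -[a' /and3P[]].
  apply/existsP/idP => [[a' /and3P[/eqP[<-] -> ->]] //|/andP[c_free ca]].
  by exists a; rewrite eqxx c_free ca.
- by apply: eq_bigr => b _; apply: eq_bigr => d _; rewrite /edge_cross_bottom /= inE.
Qed.

Theorem lemma2p5 (R : realFieldType) (q : R) (alpha p t : nat) :
  0 < q -> q < 1 -> (t <= p)%N ->
  \sum_(M : matching alpha p 0 | in_M M && (nedges M == t)) q ^+ cr M
  = qbinom q (p + alpha) t * qbinom q p t * qfact q t.
Proof.
move=> q_gt0 q_lt1 _.
have q_nonroot m : (0 < m)%N -> q ^+ m != 1.
  by move=> m_gt0; rewrite lt_eqF // exprn_ilt1 ?ltW // -lt0n.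
transitivity (crossing_sum q [set: 'I_(alpha + 0 + p)] [set: 'I_(0 + p)] t).
  by apply: eq_big => [M|M _]; rewrite ?in_M0 ?nedges_nmatched ?cr_crossings.
by rewrite crossing_sum_closed // !cardsT !card_ord addn0 add0n addnC.
Qed.
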